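(* Let $\ell\in\{\ell_{lin},\ell_{log}\}$ and suppose the matrix $[X\ Z]\in\mathbb{R}^{n\times(p_1+p_2)}$ is $s$-regular, where $s=s_1+s_2$. Then (SCL) has a global minimizer, (SCL) has only finitely many local minimizers, and each local minimizer $\beta^*$ is a strict (isolated) local minimizer: there exists $\delta>0$ such that $\beta^*$ is the unique minimizer of $f$ over $\{\beta\in\Sigma:\|\beta-\beta^*\|<\delta\}$.
   Context: Data: $X\in\mathbb{R}^{n\times p_1}$, $Z\in\mathbb{R}^{n\times p_2}$ with rows $x_i,z_i$; $y\in\mathbb{R}^n$ ($y\in\{0,1\}^n$ for $\ell_{log}$); $a,b,c>0$; integers $1\le s_j\le p_j$. Losses $\ell_{lin}(\beta;X,y)=\frac12\sum_i(y_i-\langle x_i,\beta\rangle)^2$, $\ell_{log}(\beta;X,y)=\sum_i(\log(1+\exp\langle x_i,\beta\rangle)-y_i\langle x_i,\beta\rangle)$. Objective $f(\beta)=\frac1n[a\ell(\beta_1;X,y)+b\ell(\beta_2;Z,y)+\frac c2\|X\beta_1-Z\beta_2\|^2]$, $\beta=(\beta_1;\beta_2)$. (SCL): minimize $f$ subject to $\|\beta_1\|_0\le s_1,\|\beta_2\|_0\le s_2$; feasible set $\Sigma$. A local minimizer is a feasible point minimizing $f$ over feasible points in some neighborhood. A matrix is $s$-regular if any $s$ of its columns are linearly independent. *)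

From HB Require Import structures.
From mathcomp Require Import all_boot all_order all_algebra.
From mathcomp Require Import all_classical all_reals all_analysis.
Set Implicit Arguments. Unset Strict Implicit. Unset Printing Implicit Defensive.
Import Order.TTheory GRing.Theory Num.Theory.
Local Open Scope ring_scope.

Inductive loss := LossLin | LossLog.

Section Defs.
Variable R : realType.

Definition sqnorm (m : nat) (v : 'cV[R]_m) : R := \sum_(i < m) (v i 0) ^+ 2.
Definition enorm (m : nat) (v : 'cV[R]_m) : R := Num.sqrt (sqnorm v).

Definition l0norm (m : nat) (v : 'cV[R]_m) : nat := #|[set j : 'I_m | v j 0 != 0]|.

Definition ell (l : loss) (n p : nat) (A : 'M[R]_(n, p)) (y : 'cV[R]_n)
  (bt : 'cV[R]_p) : R :=
  match l with
  | LossLin => 2^-1 * \sum_(i < n) (y i 0 - (A *m bt) i 0) ^+ 2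
  | LossLog => \sum_(i < n) (ln (1 + expR ((A *m bt) i 0)) - y i 0 * (A *m bt) i 0)
  end.

(* objective f, with beta = (beta_1; beta_2) stacked in 'cV_(p1+p2) *)
Definition fobj (l : loss) (n p1 p2 : nat) (X : 'M[R]_(n, p1)) (Z : 'M[R]_(n, p2))
  (y : 'cV[R]_n) (a b c : R) (bt : 'cV[R]_(p1 + p2)) : R :=
  n%:R^-1 * (a * ell l X y (usubmx bt) + b * ell l Z y (dsubmx bt)
             + c / 2 * sqnorm (X *m usubmx bt - Z *m dsubmx bt)).

Definition feasible (p1 p2 s1 s2 : nat) (bt : 'cV[R]_(p1 + p2)) : Prop :=
  (l0norm (usubmx bt : 'cV_p1) <= s1)%N /\ (l0norm (dsubmx bt : 'cV_p2) <= s2)%N.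

Definition s_regular (n p : nat) (A : 'M[R]_(n, p)) (s : nat) : Prop :=
  forall S : {set 'I_p}, #|S| = s ->
    forall v : 'cV[R]_p, (forall j, j \notin S -> v j 0 = 0) ->
      A *m v = 0 -> v = 0.

Definition global_minimizer (p1 p2 s1 s2 : nat) (f : 'cV[R]_(p1 + p2) -> R)
  (bt : 'cV[R]_(p1 + p2)) : Prop :=
  feasible s1 s2 bt /\ forall bt', feasible s1 s2 bt' -> f bt <= f bt'.

Definition local_minimizer (p1 p2 s1 s2 : nat) (f : 'cV[R]_(p1 + p2) -> R)
  (bt : 'cV[R]_(p1 + p2)) : Prop :=
  feasible s1 s2 bt /\ exists2 d : R, 0 < d &
    forall bt', feasible s1 s2 bt' -> enorm (bt' - bt) < d -> f bt <= f bt'.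

End Defs.

(* Both losses are convex, so along any segment f is convex and even strongly
   convex in the direction of the residual [gap beta = X beta_1 - Z beta_2]
   ([fobj_convex]).  Since [X Z] is (s1+s2)-regular, [gap] is injective on
   Sigma ([gap_gt0]).  A segment from a local minimizer x to a feasible z whose
   support contains supp x stays in Sigma, hence f x < f z
   ([locmin_lt_supersupport]).  Points near x have such a support
   ([support_stable]), so local minimizers are strict; two local minimizers
   with equal support coincide, so there are finitely many.  For existence,
   minimizing |gap|^2 on the unit sphere of the closed cone Sigma gives
   f beta >= q |beta|^2 on Sigma, and a coercive continuous function attains
   its minimum on a closed set ([coercive_min]). *)

From HB Require Import structures.
From mathcomp Require Import all_boot all_order all_algebra.
From mathcomp Require Import all_classical all_reals all_analysis.
From mathcomp Require Import ring lra.
Import Order.TTheory GRing.Theory Num.Theory.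
Import numFieldTopology.Exports numFieldNormedType.Exports.
Local Open Scope ring_scope.
Local Open Scope classical_set_scope.

Set Implicit Arguments.
Unset Strict Implicit.
Unset Printing Implicit Defensive.

Section Norms.
Variable R : realType.

(* The one-dimensional strong-convexity identity behind every convexity estimate. *)
Lemma sqr_mix (t u w : R) :
  (t * u + (1 - t) * w) ^+ 2 = t * u ^+ 2 + (1 - t) * w ^+ 2 - t * (1 - t) * (u - w) ^+ 2.
Proof. by ring. Qed.

Lemma sqnorm_ge0 m (v : 'cV[R]_m) : 0 <= sqnorm v.
Proof. by apply: sumr_ge0 => i _; exact: sqr_ge0. Qed.

Lemma sqnorm_gt0 m (v : 'cV[R]_m) : v != 0 -> 0 < sqnorm v.
Proof.
apply: contraNT; rewrite -leNgt le_eqVlt ltNge sqnorm_ge0 orbF.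
rewrite psumr_eq0 => [/allP v0|i _]; last exact: sqr_ge0.
apply/eqP/matrixP => i j; rewrite ord1 mxE.
by apply/eqP; rewrite -sqrf_eq0; exact: v0 (mem_index_enum _).
Qed.

Lemma sqnormZ m k (v : 'cV[R]_m) : sqnorm (k *: v) = k ^+ 2 * sqnorm v.
Proof. by rewrite /sqnorm mulr_sumr; apply: eq_bigr => i _; rewrite mxE exprMn. Qed.

Lemma sqnorm_mix m (u w : 'cV[R]_m) t :
  sqnorm (t *: u + (1 - t) *: w) =
  t * sqnorm u + (1 - t) * sqnorm w - t * (1 - t) * sqnorm (u - w).
Proof.
rewrite /sqnorm !mulr_sumr -big_split -sumrB /=; apply: eq_bigr => i _.
by rewrite !mxE sqr_mix.
Qed.

Lemma enorm_entry m (v : 'cV[R]_m) j : `|v j 0| <= enorm v.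
Proof.
rewrite /enorm -sqrtr_sqr ler_sqrt ?sqnorm_ge0 //.
by rewrite /sqnorm (bigD1 j) //= lerDl sumr_ge0 // => i _; exact: sqr_ge0.
Qed.

Lemma enormZ m k (v : 'cV[R]_m) : enorm (k *: v) = `|k| * enorm v.
Proof. by rewrite /enorm sqnormZ sqrtrM ?sqr_ge0 // sqrtr_sqr. Qed.

Lemma enorm_gt0 m (v : 'cV[R]_m) : v != 0 -> 0 < enorm v.
Proof. by move=> v0; rewrite sqrtr_gt0 sqnorm_gt0. Qed.

End Norms.

Section Softplus.
Variable R : realType.

Lemma expR_convex (t u w : R) : 0 <= t -> t <= 1 ->
  expR (t * u + (1 - t) * w) <= t * expR u + (1 - t) * expR w.
Proof. by move=> t0 t1; have := convex_expR (Itv01 t0 t1) u w; rewrite !convRE. Qed.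

(* Writing
   [L = t ln A + (1-t) ln B] with [A = 1 + e^p], [B = 1 + e^q] and
   [m = t p + (1-t) q], convexity of [expR] bounds both [e^-L] and [e^(m-L)],
   and the two bounds add up to 1; hence [1 + e^m <= e^L]. *)
Lemma softplus_convex (t p q : R) : 0 <= t -> t <= 1 ->
  ln (1 + expR (t * p + (1 - t) * q)) <=
  t * ln (1 + expR p) + (1 - t) * ln (1 + expR q).
Proof.
move=> t0 t1; set A := 1 + expR p; set B := 1 + expR q.
have A0 : 0 < A by rewrite addr_gt0 ?expR_gt0.
have B0 : 0 < B by rewrite addr_gt0 ?expR_gt0.
set L := t * ln A + (1 - t) * ln B.
have e1 : (expR L)^-1 <= t / A + (1 - t) / B.
  have := expR_convex (- ln A) (- ln B) t0 t1.
  by rewrite !mulrN -opprD !expRN !lnK ?posrE.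
have e2 : expR (t * p + (1 - t) * q) / expR L <=
          t * (expR p / A) + (1 - t) * (expR q / B).
  have := expR_convex (p - ln A) (q - ln B) t0 t1.
  by rewrite !mulrBr addrACA -opprD !expRB !lnK ?posrE.
have hsum : (1 + expR (t * p + (1 - t) * q)) / expR L <= 1.
  rewrite mulrDl mul1r; apply: le_trans (lerD e1 e2) _.
  have -> : t / A + (1 - t) / B + (t * (expR p / A) + (1 - t) * (expR q / B)) =
            t * (A / A) + (1 - t) * (B / B) by rewrite /A /B; ring.
  by rewrite !divff ?gt_eqF // !mulr1 subrKC.
rewrite -[leRHS]expRK ler_ln ?posrE ?addr_gt0 ?expR_gt0 //.
by move: hsum; rewrite ler_pdivrMr ?expR_gt0 // mul1r.
Qed.

End Softplus.

Section Losses.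
Variable R : realType.

Lemma ell_convex l n m (A : 'M[R]_(n, m)) (y : 'cV[R]_n) (u w : 'cV[R]_m) t :
  0 <= t -> t <= 1 ->
  ell l A y (t *: u + (1 - t) *: w) <= t * ell l A y u + (1 - t) * ell l A y w.
Proof.
move=> t0 t1; rewrite /ell mulmxDr -!scalemxAr.
move: (A *m u) (A *m w) => zu zw; case: l.
- rewrite mulrCA [(1 - t) * _]mulrCA -mulrDr ler_wpM2l ?invr_ge0 ?ler0n //.
  rewrite !mulr_sumr -big_split /= ler_sum // => i _; rewrite !mxE.
  have -> : y i 0 - (t * zu i 0 + (1 - t) * zw i 0) =
            t * (y i 0 - zu i 0) + (1 - t) * (y i 0 - zw i 0) by ring.
  rewrite sqr_mix lerBlDr lerDl mulr_ge0 ?sqr_ge0 // mulr_ge0 //.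
  by rewrite subr_ge0.
- rewrite !mulr_sumr -big_split /= ler_sum // => i _; rewrite !mxE.
  by have := softplus_convex (zu i 0) (zw i 0) t0 t1; lra.
Qed.

(* Both losses are nonnegative; for the logistic loss this needs binary labels. *)
Lemma ell_ge0 l n m (A : 'M[R]_(n, m)) (y : 'cV[R]_n) (v : 'cV[R]_m) :
  (l = LossLog -> forall i, y i 0 = 0 \/ y i 0 = 1) -> 0 <= ell l A y v.
Proof.
rewrite /ell; case: l => [_|hy].
  by rewrite mulr_ge0 ?invr_ge0 ?ler0n ?sumr_ge0 // => i _; exact: sqr_ge0.
apply: sumr_ge0 => i _; set z := (A *m v) i 0.
have lnz : z <= ln (1 + expR z).
  by rewrite -[leLHS]expRK ler_ln ?posrE ?addr_gt0 ?expR_gt0 // lerDr.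
have ln0 : 0 <= ln (1 + expR z) by rewrite ln_ge0 // lerDl expR_ge0.
by case: (hy erefl i) => ->; rewrite ?mul0r ?mul1r subr_ge0 // subr0.
Qed.

End Losses.

Lemma extend_set (T : finType) (A : {set T}) k :
  (#|A| <= k <= #|T|)%N -> exists S : {set T}, A \subset S /\ #|S| = k.
Proof.
move=> /andP[Ak kT]; move: {2}(k - #|A|)%N (erefl (k - #|A|)%N) => d.
elim: d A Ak => [|d IH] A Ak hd.
  by exists A; split => //; apply/eqP; rewrite eqn_leq Ak -subn_eq0 hd.
have [x xA] : exists x, x \notin A.
  case: (pickP [pred x | x \notin A]) => [x xA|Afull]; first by exists x.
  have eA : A = [set: T]%SET by apply/setP => x; rewrite inE; exact: negbFE (Afull x).
  by move: kT; rewrite -subn_eq0 -cardsT -eA hd.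
have xAk : (#|x |: A| <= k)%N by rewrite cardsU1 xA add1n -subn_gt0 hd.
have xAd : (k - #|x |: A|)%N = d by rewrite cardsU1 xA add1n subnS hd.
have [S [AS cS]] := IH (x |: A) xAk xAd.
by exists S; split => //; exact: fintype.subset_trans (finset.subsetUr _ _) AS.
Qed.

Section Support.
Variable R : realType.

Lemma l0normE m (v : 'cV[R]_m) : l0norm v = (\sum_(j < m) (v j 0 != 0)%R)%N.
Proof.
by rewrite /l0norm -sum1_card big_mkcond; apply: eq_bigr => j _; rewrite inE.
Qed.

Lemma l0norm0 m : l0norm (0 : 'cV[R]_m) = 0%N.
Proof. by rewrite l0normE big1 // => j _; rewrite mxE eqxx. Qed.

Lemma l0normN m (v : 'cV[R]_m) : l0norm (- v) = l0norm v.
Proof. by rewrite !l0normE; apply: eq_bigr => j _; rewrite mxE oppr_eq0. Qed.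

Lemma l0norm_col_mx m1 m2 (u : 'cV[R]_m1) (d : 'cV[R]_m2) :
  l0norm (col_mx u d) = (l0norm u + l0norm d)%N.
Proof.
by rewrite !l0normE big_split_ord; congr addn; apply: eq_bigr => j _;
  rewrite ?col_mxEu ?col_mxEd.
Qed.

Lemma l0norm_mono m (u v : 'cV[R]_m) :
  (forall j, v j 0 = 0 -> u j 0 = 0) -> (l0norm u <= l0norm v)%N.
Proof.
move=> uv; apply: subset_leq_card; apply/fintype.subsetP => j; rewrite !inE.
by apply: contraNN => /eqP /uv ->.
Qed.

(* An [s]-regular matrix is injective on vectors with at most [s] nonzero
   entries: enlarge the support to exactly [s] indices. *)
Lemma s_regular_sparse n p (A : 'M[R]_(n, p)) s (v : 'cV[R]_p) :
  s_regular A s -> (s <= p)%N -> (l0norm v <= s)%N -> A *m v = 0 -> v = 0.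
Proof.
move=> regA sp vs Av0.
have [|S [suppS cS]] := @extend_set _ [set j | v j 0 != 0] s.
  by rewrite vs card_ord sp.
apply: (regA S cS) => // j jS; apply/eqP; apply: contraNT jS => vj.
by apply: (fintype.subsetP suppS); rewrite inE.
Qed.

Lemma support_stable m (x : 'cV[R]_m) :
  exists2 e : R, 0 < e & forall z : 'cV[R]_m,
    (forall j, `|x j 0 - z j 0| < e) -> forall j, z j 0 = 0 -> x j 0 = 0.
Proof.
pose F j := if x j 0 == 0 then 1 else `|x j 0|.
have F0 j : 0 < F j by rewrite /F; case: eqP => // /eqP; rewrite normr_gt0.
exists (\big[Num.min/1]_j F j).
  by apply: (big_ind (fun e => 0 < e)) => // e e' e0 e'0; rewrite lt_min e0 e'0.
move=> z xz j zj; apply/eqP; apply: contraT => xj.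
have : \big[Num.min/1]_k F k <= `|x j 0|.
  by rewrite (bigD1 j) //= ge_min /F (negbTE xj) lexx.
by have := xz j; rewrite zj subr0 leNgt => ->.
Qed.

End Support.

Section Feasible.
Variables (R : realType) (p1 p2 s1 s2 : nat).

Lemma feasible_mono (u v : 'cV[R]_(p1 + p2)) :
  (forall j, v j 0 = 0 -> u j 0 = 0) -> feasible s1 s2 v -> feasible s1 s2 u.
Proof.
move=> uv [h1 h2]; split.
  by apply: leq_trans h1; apply: l0norm_mono => j; rewrite !mxE; exact: uv.
by apply: leq_trans h2; apply: l0norm_mono => j; rewrite !mxE; exact: uv.
Qed.

Lemma feasible_scale k (v : 'cV[R]_(p1 + p2)) :
  feasible s1 s2 v -> feasible s1 s2 (k *: v).
Proof. by apply: feasible_mono => j vj; rewrite mxE vj mulr0. Qed.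

Lemma feasible0 : feasible s1 s2 (0 : 'cV[R]_(p1 + p2)).
Proof. by split; rewrite raddf0 l0norm0. Qed.

Lemma feasible_sparse (v : 'cV[R]_(p1 + p2)) :
  feasible s1 s2 v -> (l0norm (col_mx (usubmx v) (- dsubmx v)) <= s1 + s2)%N.
Proof. by move=> [h1 h2]; rewrite l0norm_col_mx l0normN leq_add. Qed.

(* [Sigma] is closed, seen as a set of row vectors for the product topology:
   near a limit point, feasible points have a larger support. *)
Lemma feasible_closed : closed [set v : 'rV[R]_(p1 + p2) | feasible s1 s2 v^T].
Proof.
move=> v vcl; have [e e0 he] := support_stable v^T.
have [w [fw vw]] := vcl _ (nbhsx_ballx v e e0).
apply: feasible_mono fw => j; apply: he => k; rewrite !mxE.
by case: vw => _ /(_ 0 k).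
Qed.

End Feasible.

Section CompactnessContinuity.
Variables (R : realType) (N : nat).

Lemma compact_in_ball (A : set 'rV[R]_N) r :
  closed A -> (forall v, A v -> `|v| <= r) -> compact A.
Proof.
move=> cA Ar; apply: bounded_closed_compact => //.
rewrite /bounded_set /bounded_near; near=> M => v Av.
by apply: le_trans (Ar v Av) _; near: M; apply: nbhs_pinfty_ge; exact: num_real.
Unshelve. all: by end_near.
Qed.

Lemma closed_norm (P : set R) : closed P -> closed [set v : 'rV[R]_N | P `|v|].
Proof.
move=> cP; apply: (@preimage_closed _ _ (fun v : 'rV[R]_N => `|v|)) cP => v _.
exact: norm_continuous.
Qed.

(* A continuous, 2-homogeneous function, positive on a closed cone away from 0,
   grows at least quadratically on that cone (minimize it on the unit sphere). *)
Lemma homogeneous_lower_bound (F : set 'rV[R]_N) (g : 'rV[R]_N -> R) :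
  closed F -> (forall k v, F v -> F (k *: v)) -> continuous g ->
  (forall k v, g (k *: v) = k ^+ 2 * g v) -> (forall v, F v -> v != 0 -> 0 < g v) ->
  exists2 k, 0 < k & forall v, F v -> k * `|v| ^+ 2 <= g v.
Proof.
move=> cF sF cg gZ gpos.
have g0 : g 0 = 0 by rewrite -(scale0r (0 : 'rV[R]_N)) gZ expr0n mul0r.
pose K := F `&` [set v | `|v| = 1].
have normalize v : F v -> v != 0 -> K (`|v|^-1 *: v).
  by move=> Fv v0; split; [exact: sF | rewrite /= normrZ normfV normr_id mulVf ?normr_eq0].
have [K0|K0] := pselect (K !=set0); last first.
  exists 1 => // v Fv; have [->|v0] := eqVneq v 0; first by rewrite g0 normr0 expr0n mulr0.
  by case: K0; exists (`|v|^-1 *: v); exact: normalize.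
have cK : compact K.
  apply: (compact_in_ball (r := 1) (closedI cF (closed_norm (@closed_eq R 1)))).
  by move=> v [_ ->].
have [v0 /set_mem [Fv0 nv0] v0min] := EVT_min_rV K0 cK (continuous_subspaceT cg).
exists (g v0).
  by apply: gpos Fv0 _; apply: contra_eqN nv0 => /eqP ->; rewrite normr0 eq_sym oner_eq0.
move=> v Fv; have [->|v0'] := eqVneq v 0; first by rewrite g0 normr0 expr0n mulr0.
have := v0min _ (mem_set (normalize v Fv v0')); rewrite gZ exprVn.
by rewrite ler_pdivlMl ?exprn_gt0 ?normr_gt0 // mulrC.
Qed.

Lemma coercive_min (F : set 'rV[R]_N) (g : 'rV[R]_N -> R) q :
  closed F -> F 0 -> continuous g -> 0 < q ->
  (forall v, F v -> q * `|v| ^+ 2 <= g v) ->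
  exists2 v, F v & forall w, F w -> g v <= g w.
Proof.
move=> cF F0 cg q0 gq.
have g0 : 0 <= g 0 by have := gq 0 F0; rewrite normr0 expr0n mulr0.
set r := 1 + g 0 / q.
have r1 : 1 <= r by rewrite /r lerDl divr_ge0 // ltW.
have qr : g 0 = q * (r - 1) by rewrite /r addrAC subrr add0r mulrCA mulfV ?gt_eqF // mulr1.
pose B := F `&` [set v | `|v| <= r].
have B0 : B 0 by split => //=; rewrite normr0 (le_trans ler01 r1).
have cB : compact B.
  apply: (compact_in_ball (r := r) (closedI cF (closed_norm (@closed_le R r)))).
  by move=> v [_ vr].
have [v /set_mem [Fv _] vmin] := EVT_min_rV (ex_intro _ 0 B0) cB (continuous_subspaceT cg).
exists v => // w Fw; have [wr|rw] := lerP `|w| r; first exact: vmin (mem_set (conj Fw wr)).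
apply: le_trans (vmin _ (mem_set B0)) (le_trans _ (gq w Fw)).
have w1 : 1 < `|w| := le_lt_trans r1 rw.
by rewrite qr ler_pM2l //; nra.
Qed.

Lemma mulmx_coord_continuous m (P : 'M[R]_(m, N)) i :
  continuous (fun v : 'rV[R]_N => (P *m v^T) i 0).
Proof.
have -> : (fun v : 'rV[R]_N => (P *m v^T) i 0) = (fun v => \sum_k P i k * v 0 k).
  by apply/funext => v; rewrite !mxE; apply: eq_bigr => k _; rewrite !mxE.
apply: continuous_big => [|k _]; first exact: add_continuous.
by move=> v; apply: continuousM; [exact: cst_continuous | exact: coord_continuous].
Qed.

Lemma sqnorm_continuous m (P : 'M[R]_(m, N)) :
  continuous (fun v : 'rV[R]_N => sqnorm (P *m v^T)).
Proof.
apply: continuous_big => [|i _]; first exact: add_continuous.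
move=> v; pose e := fun v : 'rV[R]_N => (P *m v^T) i 0.
by apply: (@continuousM _ _ e e); exact: mulmx_coord_continuous.
Qed.

Lemma ell_continuous l n m (A : 'M[R]_(n, m)) (y : 'cV[R]_n) (P : 'M[R]_(m, N)) :
  continuous (fun v : 'rV[R]_N => ell l A y (P *m v^T)).
Proof.
pose z i (v : 'rV[R]_N) := (A *m (P *m v^T)) i 0.
have cz i : continuous (z i).
  by rewrite /z; under eq_fun do rewrite mulmxA; exact: mulmx_coord_continuous.
rewrite /ell; case: l.
- pose d i v := y i 0 - z i v.
  have cd i : continuous (d i) by move=> v; apply: continuousB (cz i v); exact: cst_continuous.
  move=> v; apply: (@continuousM _ _ (fun=> 2^-1) (fun v => \sum_i d i v ^+ 2)).
    exact: cst_continuous.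
  move: v; apply: continuous_big => [|i _ v]; first exact: add_continuous.
  exact: (@continuousM _ _ (d i) (d i) _ (cd i v) (cd i v)).
- apply: continuous_big => [|i _ v]; first exact: add_continuous.
  apply: (@continuousB _ _ _ (fun v => ln (1 + expR (z i v))) (fun v => y i 0 * z i v)).
    have c1 : {for v, continuous (fun v => 1 + expR (z i v))}.
      apply: continuousD; first exact: cst_continuous.
      exact: continuous_comp (cz i v) (@continuous_expR _ _).
    apply: (continuous_comp c1); apply: continuous_ln.
    by rewrite addr_gt0 ?expR_gt0.
  by apply: continuousM; [exact: cst_continuous | exact: cz].
Qed.

End CompactnessContinuity.

Section SparseCoupledLearning.
Variables (R : realType) (l : loss) (n p1 p2 s1 s2 : nat)
  (X : 'M[R]_(n, p1)) (Z : 'M[R]_(n, p2)) (y : 'cV[R]_n) (a b c : R).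
Hypotheses (hn : (0 < n)%N) (ha : 0 < a) (hb : 0 < b) (hc : 0 < c)
  (hs1 : (s1 <= p1)%N) (hs2 : (s2 <= p2)%N)
  (hy : l = LossLog -> forall i, y i 0 = 0 \/ y i 0 = 1)
  (hreg : s_regular (row_mx X Z) (s1 + s2)).

Local Notation N := (p1 + p2).
Local Notation f := (fobj l X Z y a b c).
Local Notation feasible := (feasible s1 s2).

(* The coupling residual [X beta_1 - Z beta_2], as a linear map of [beta]. *)
Definition gap (bt : 'cV[R]_N) : 'cV[R]_n := row_mx X (- Z) *m bt.

(* The modulus of strong convexity of [f] along the coupling residual. *)
Definition kappa : R := c / 2 * n%:R^-1.

Lemma kappa_gt0 : 0 < kappa.
Proof. by rewrite mulr_gt0 ?divr_gt0 ?invr_gt0 ?ltr0n. Qed.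

Lemma fobjE bt : f bt = n%:R^-1 * (a * ell l X y (usubmx bt) +
  b * ell l Z y (dsubmx bt) + c / 2 * sqnorm (gap bt)).
Proof.
suff -> : gap bt = X *m usubmx bt - Z *m dsubmx bt by [].
by rewrite /gap -{1}(vsubmxK bt) mul_row_col mulNmx.
Qed.

(* s-regularity of [X Z] makes the residual vanish on [Sigma] only at 0. *)
Lemma gap_gt0 bt : feasible bt -> bt != 0 -> 0 < sqnorm (gap bt).
Proof.
move=> fbt bt0; apply: sqnorm_gt0; apply: contra bt0 => /eqP gap0.
have w0 : col_mx (usubmx bt) (- dsubmx bt) = 0.
  apply: s_regular_sparse hreg (leq_add hs1 hs2) (feasible_sparse fbt) _.
  by rewrite mul_row_col mulmxN -mulNmx -mul_row_col vsubmxK; exact: gap0.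
move: w0; rewrite -col_mx0 => /eq_col_mx [u0 /eqP]; rewrite oppr_eq0 => /eqP d0.
by rewrite -(vsubmxK bt) u0 d0 col_mx0.
Qed.

Lemma fobj_convex u w t : 0 <= t -> t <= 1 ->
  f (t *: u + (1 - t) *: w) <=
  t * f u + (1 - t) * f w - t * (1 - t) * kappa * sqnorm (gap (u - w)).
Proof.
move=> t0 t1; have ninv0 : 0 <= n%:R^-1 :> R by rewrite invr_ge0.
have hX := ler_wpM2l (mulr_ge0 ninv0 (ltW ha)) (ell_convex l X y (usubmx u) (usubmx w) t0 t1).
have hZ := ler_wpM2l (mulr_ge0 ninv0 (ltW hb)) (ell_convex l Z y (dsubmx u) (dsubmx w) t0 t1).
have eU : usubmx (t *: u + (1 - t) *: w) = t *: usubmx u + (1 - t) *: usubmx w.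
  by rewrite linearD !linearZ.
have eD : dsubmx (t *: u + (1 - t) *: w) = t *: dsubmx u + (1 - t) *: dsubmx w.
  by rewrite linearD !linearZ.
rewrite !fobjE eU eD /gap mulmxDr mulmxBr -!scalemxAr sqnorm_mix.
by move: hX hZ; rewrite /kappa; lra.
Qed.

(* The segment from [x] to such a
   point stays in [Sigma], and [f] is strictly convex along it. *)
Lemma locmin_lt_supersupport x z d : 0 < d ->
  (forall v, feasible v -> enorm (v - x) < d -> f x <= f v) ->
  feasible z -> (forall j, z j 0 = 0 -> x j 0 = 0) -> z != x -> f x < f z.
Proof.
move=> d0 xmin fz zx zneqx.
have fzx : feasible (z - x).
  by apply: feasible_mono fz => j zj; rewrite !mxE zj zx // subrr.
have K0 : 0 < sqnorm (gap (z - x)) by rewrite gap_gt0 // subr_eq0.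
set E := enorm (z - x).
have E0 : 0 < E by rewrite enorm_gt0 // subr_eq0.
set t := d / (d + E).
have t0 : 0 < t by rewrite divr_gt0 ?addr_gt0.
have t1 : t < 1 by rewrite ltr_pdivrMr ?addr_gt0 // mul1r ltrDl.
have fv : feasible (t *: z + (1 - t) *: x).
  by apply: feasible_mono fz => j zj; rewrite !mxE zj zx // !mulr0 addr0.
have dv : enorm (t *: z + (1 - t) *: x - x) < d.
  have -> : t *: z + (1 - t) *: x - x = t *: (z - x).
    by apply/matrixP => i j; rewrite !mxE; ring.
  rewrite enormZ gtr0_norm // -/E /t mulrAC ltr_pdivrMr ?addr_gt0 //.
  by rewrite ltr_pM2l // ltrDr.
have P0 : 0 < t * (1 - t) * kappa * sqnorm (gap (z - x)).
  by rewrite mulr_gt0 // mulr_gt0 ?kappa_gt0 // mulr_gt0 // subr_gt0.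
have := fobj_convex z x (ltW t0) (ltW t1); have := xmin _ fv dv => h1 h2.
by rewrite -(ltr_pM2l t0); lra.
Qed.

(* Every local minimizer is strict: nearby feasible points have a larger
   support, so [locmin_lt_supersupport] applies to them. *)
Lemma locmin_isolated x : local_minimizer s1 s2 f x ->
  exists2 d : R, 0 < d & forall z, feasible z -> enorm (z - x) < d -> z <> x ->
    f x < f z.
Proof.
move=> [fx [d d0 xmin]]; have [e e0 xe] := support_stable x.
exists (Num.min d e) => [|z fz zd zx]; first by rewrite lt_min d0 e0.
apply: locmin_lt_supersupport d0 xmin fz _ (introN eqP zx).
apply: xe => j; rewrite distrC; have := enorm_entry (z - x) j; rewrite !mxE => zxj.
by apply: le_lt_trans zxj (lt_le_trans zd _); rewrite ge_min lexx orbT.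
Qed.

(* Two local minimizers with the same support coincide, since each would be
   strictly better than the other. *)
Lemma locmin_support_inj :
  {in [set x | local_minimizer s1 s2 f x] &,
    injective (fun x : 'cV[R]_N => [set j | x j 0 != 0]%SET)}.
Proof.
move=> x z /set_mem [fx [dx dx0 xmin]] /set_mem [fz [dz dz0 zmin]] /setP eqsupp.
have zx j : z j 0 = 0 -> x j 0 = 0.
  by move=> zj; have := eqsupp j; rewrite !inE zj eqxx => /negbFE /eqP.
have xz j : x j 0 = 0 -> z j 0 = 0.
  by move=> xj; have := eqsupp j; rewrite !inE xj eqxx => /esym /negbFE /eqP.
apply/eqP; apply: contraT => xneqz; have zneqx : z != x by rewrite eq_sym.
have := lt_trans (locmin_lt_supersupport dx0 xmin fz zx zneqx)
  (locmin_lt_supersupport dz0 zmin fx xz xneqz).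
by rewrite ltxx.
Qed.

(* Hence there are at most as many local minimizers as supports. *)
Lemma locmin_finite : finite_set [set x | local_minimizer s1 s2 f x].
Proof.
rewrite -(eq_finite_set (inj_card_eq locmin_support_inj)).
exact: finite_finset.
Qed.

(* Coercivity: both losses are nonnegative, so [f] dominates the coupling term. *)
Lemma fobj_lower bt : kappa * sqnorm (gap bt) <= f bt.
Proof.
have ninv0 : 0 <= n%:R^-1 :> R by rewrite invr_ge0.
have hX := mulr_ge0 (ltW ha) (ell_ge0 X (usubmx bt) hy).
have hZ := mulr_ge0 (ltW hb) (ell_ge0 Z (dsubmx bt) hy).
by have := mulr_ge0 ninv0 (addr_ge0 hX hZ); rewrite fobjE /kappa; lra.
Qed.

Lemma fobj_continuous : continuous (fun v : 'rV[R]_N => f v^T).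
Proof.
pose PX : 'M[R]_(p1, N) := rowsub (lshift p2) 1%:M.
pose PZ : 'M[R]_(p2, N) := rowsub (@rshift p1 p2) 1%:M.
have -> : (fun v : 'rV[R]_N => f v^T) = fun v => n%:R^-1 * (a * ell l X y (PX *m v^T) +
    b * ell l Z y (PZ *m v^T) + c / 2 * sqnorm (row_mx X (- Z) *m v^T)).
  by apply/funext => v; rewrite fobjE usubmxEsub dsubmxEsub -!rowsubE.
move=> v; have cst (k : R) : {for v, continuous (fun=> k)} by exact: cst_continuous.
have hX : {for v, continuous (fun w => ell l X y (PX *m w^T))} by exact: ell_continuous.
have hZ : {for v, continuous (fun w => ell l Z y (PZ *m w^T))} by exact: ell_continuous.
have hG : {for v, continuous (fun w => sqnorm (row_mx X (- Z) *m w^T))}.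
  exact: sqnorm_continuous.
exact: continuousM (cst _) (continuousD (continuousD (continuousM (cst _) hX)
  (continuousM (cst _) hZ)) (continuousM (cst _) hG)).
Qed.

(* Existence: on [Sigma], [f] grows quadratically (the residual controls the
   norm on the closed cone [Sigma]), so it attains its infimum. *)
Lemma exists_global_min : exists bt, global_minimizer s1 s2 f bt.
Proof.
pose F := [set v : 'rV[R]_N | feasible v^T].
have cF : closed F by exact: feasible_closed.
have sF k v : F v -> F (k *: v) by rewrite /F /= linearZ; exact: feasible_scale.
have gZ k v : sqnorm (gap (k *: v)^T) = k ^+ 2 * sqnorm (gap v^T).
  by rewrite linearZ /gap -scalemxAr sqnormZ.
have gpos v : F v -> v != 0 -> 0 < sqnorm (gap v^T).
  by move=> Fv v0; apply: gap_gt0 => //; rewrite -trmx0 (inj_eq trmx_inj).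
have cg : continuous (fun v : 'rV[R]_N => sqnorm (gap v^T)).
  exact: sqnorm_continuous.
have [k k0 hk] := homogeneous_lower_bound cF sF cg gZ gpos.
have lower v : F v -> kappa * k * `|v| ^+ 2 <= f v^T.
  move=> Fv; apply: le_trans (fobj_lower _); rewrite -mulrA.
  by apply: ler_wpM2l; [exact: ltW kappa_gt0 | exact: hk].
have F0 : F 0 by rewrite /F /= trmx0; exact: feasible0.
have [v Fv vmin] := coercive_min cF F0 fobj_continuous (mulr_gt0 kappa_gt0 k0) lower.
by exists v^T; split => // bt fbt; have := vmin bt^T; rewrite /F /= !trmxK; apply.
Qed.

End SparseCoupledLearning.

Theorem theorem3p5 (R : realType) (l : loss) (n p1 p2 s1 s2 : nat)
  (X : 'M[R]_(n, p1)) (Z : 'M[R]_(n, p2)) (y : 'cV[R]_n) (a b c : R)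
  (hn : (0 < n)%N) (ha : 0 < a) (hb : 0 < b) (hc : 0 < c)
  (hs1 : (1 <= s1 <= p1)%N) (hs2 : (1 <= s2 <= p2)%N)
  (hy : l = LossLog -> forall i, y i 0 = 0 \/ y i 0 = 1)
  (hreg : s_regular (row_mx X Z) (s1 + s2)) :
  let f := fobj l X Z y a b c in
  (exists bt, global_minimizer s1 s2 f bt) /\
  finite_set [set bt | local_minimizer s1 s2 f bt] /\
  (forall bt, local_minimizer s1 s2 f bt ->
     exists2 d : R, 0 < d &
       forall bt', feasible s1 s2 bt' -> enorm (bt' - bt) < d -> bt' <> bt ->
         f bt < f bt').
Proof.
move=> f; have /andP[_ s1p1] := hs1; have /andP[_ s2p2] := hs2.
split; first exact: exists_global_min.
split; first exact: locmin_finite.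
by move=> bt; apply: locmin_isolated.
Qed.
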